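(* Let $P=(X,\leq_P)$ be a finite poset and let $M\subseteq X$. For every down-set $N$ of the induced sub-poset $P|_M$ define $$M{\updownarrow}_P N := {\uparrow}_P(M\setminus N)\ \cup\ {\downarrow}_P N,$$ and let $$\mathcal{D}_{M,N}(P):=\{D\in\mathcal{D}(P) : D\cap M=N\}.$$ Then for every $N\in\mathcal{D}(P|_M)$ the mapping $$\phi_{M,N}:\mathcal{D}_{M,N}(P)\to\mathcal{D}\big(P-M{\updownarrow}_P N\big),\qquad D\mapsto D\setminus {\downarrow}_P N,$$ is an order isomorphism (with respect to set inclusion), with inverse $\phi_{M,N}^{-1}(D')=D'\cup{\downarrow}_P N$ for all $D'\in\mathcal{D}(P-M{\updownarrow}_P N)$. In consequence, $$d(P)=\sum_{N\in\mathcal{D}(P|_M)} d\big(P-M{\updownarrow}_P N\big).$$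
   Context: For a finite poset $P=(X,\leq_P)$: a subset $Y\subseteq X$ is a down-set if $x\leq_P y$ and $y\in Y$ imply $x\in Y$. $\mathcal{D}(P)$ denotes the set of down-sets of $P$ and $d(P):=\#\mathcal{D}(P)$. For $y\in X$, ${\downarrow}_P y=\{x\in X: x\leq_P y\}$, ${\uparrow}_P y=\{x\in X: y\leq_P x\}$, and for $V\subseteq X$, ${\downarrow}_P V=\bigcup_{v\in V}{\downarrow}_P v$, ${\uparrow}_P V=\bigcup_{v\in V}{\uparrow}_P v$. For $Y\subseteq X$, $P|_Y$ is the induced sub-poset $(Y,\leq_P\cap(Y\times Y))$, and $P-Y$ denotes $P|_{X\setminus Y}$. *)

From mathcomp Require Import all_boot all_order.
Set Implicit Arguments. Unset Strict Implicit. Unset Printing Implicit Defensive.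
Import Order.Theory.
Local Open Scope order_scope.

(* A finite poset P = (X, <=_P) is a finPOrderType T, with X = the whole of T.
   Subsets of X are {set T}; the induced sub-poset P|_Y is represented by Y. *)

Section Downsets.
Context {d : Order.disp_t} {T : finPOrderType d}.

Definition downset_in (Y D : {set T}) : bool :=
  (D \subset Y) &&
  [forall x, forall y, [&& x \in Y, y \in D & x <= y] ==> (x \in D)].

Definition downsets (Y : {set T}) : {set {set T}} := [set D | downset_in Y D].

Definition dnum (Y : {set T}) : nat := #|downsets Y|.

Definition down1 (y : T) : {set T} := [set x | x <= y].
Definition up1 (y : T) : {set T} := [set x | y <= x].
Definition down (V : {set T}) : {set T} := \bigcup_(v in V) down1 v.
Definition up (V : {set T}) : {set T} := \bigcup_(v in V) up1 v.

Definition updown (M N : {set T}) : {set T} := up (M :\: N) :|: down N.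

Definition DMN (M N : {set T}) : {set {set T}} :=
  [set D in downsets setT | D :&: M == N].

Definition phiMN (N D : {set T}) : {set T} := D :\: down N.
Definition phiMN_inv (N D' : {set T}) : {set T} := D' :|: down N.

End Downsets.

From mathcomp Require Import all_boot all_order.
Set Implicit Arguments. Unset Strict Implicit. Unset Printing Implicit Defensive.
Import Order.Theory.
Local Open Scope order_scope.

(* A down-set D of P with D :&: M = N must contain the down-closure of N, and
   must avoid the up-closure of M :\: N (any element there would pull an
   element of M :\: N into D).  On the remaining elements, i.e. on
   P - M updown N, the constraint D :&: M = N is automatic, so D is just an
   arbitrary down-set there, glued to down N.  Partitioning D(P) by the trace
   D :&: M, a down-set of P|_M, yields the counting formula. *)

Section Downsets.
Context {d : Order.disp_t} {T : finPOrderType d}.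
Implicit Types (M N D Y V : {set T}) (x y : T).

Lemma downsetP Y D :
  reflect (D \subset Y /\ forall x y, x \in Y -> y \in D -> x <= y -> x \in D)
          (downset_in Y D).
Proof.
apply: (iffP andP) => [[DY /forallP closedD]|[DY closedD]]; split=> //.
  move=> x y xY yD le_xy; have /forallP/(_ y) := closedD x.
  by rewrite xY yD le_xy => /implyP->.
apply/forallP=> x; apply/forallP=> y; apply/implyP=> /and3P[xY yD le_xy].
exact: closedD xY yD le_xy.
Qed.

Lemma mem_down V x : reflect (exists2 v, v \in V & x <= v) (x \in down V).
Proof.
apply: (iffP bigcupP) => [[v vV]|[v vV le_xv]]; first by rewrite inE; exists v.
by exists v; rewrite ?inE.
Qed.

Lemma mem_up V x : reflect (exists2 v, v \in V & v <= x) (x \in up V).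
Proof.
apply: (iffP bigcupP) => [[v vV]|[v vV le_vx]]; first by rewrite inE; exists v.
by exists v; rewrite ?inE.
Qed.

Lemma down_trans V x y : x <= y -> y \in down V -> x \in down V.
Proof.
by move=> le_xy /mem_down[v vV le_yv]; apply/mem_down; exists v => //; apply: le_trans le_yv.
Qed.

Lemma up_trans V x y : x <= y -> x \in up V -> y \in up V.
Proof.
by move=> le_xy /mem_up[v vV le_vx]; apply/mem_up; exists v => //; apply: le_trans le_xy.
Qed.

Lemma sub_down V : V \subset down V.
Proof. by apply/subsetP=> v vV; apply/mem_down; exists v. Qed.

Lemma sub_up V : V \subset up V.
Proof. by apply/subsetP=> v vV; apply/mem_up; exists v. Qed.

Lemma down_subset_downset V D :
  downset_in setT D -> V \subset D -> down V \subset D.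
Proof.
move=> /downsetP[_ closedD] /subsetP VD; apply/subsetP=> x /mem_down[v vV le_xv].
exact: closedD (in_setT x) (VD v vV) le_xv.
Qed.

Lemma downsetI Y D : downset_in setT D -> downset_in Y (D :&: Y).
Proof.
move=> /downsetP[_ closedD]; apply/downsetP; split; first exact: subsetIr.
move=> x y xY /setIP[yD _] le_xy; rewrite inE xY andbT.
exact: closedD (in_setT x) yD le_xy.
Qed.

Section Slice.
Variables M N : {set T}.
Hypothesis downN : downset_in M N.

Lemma mem_DMN D : (D \in DMN M N) = downset_in setT D && (D :&: M == N).
Proof. by rewrite !inE. Qed.

Lemma DMN_down_subset D : D \in DMN M N -> down N \subset D.
Proof.
rewrite mem_DMN => /andP[downD /eqP <-].
by apply: down_subset_downset; rewrite ?subsetIl.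
Qed.

Lemma DMN_notin_up D x : D \in DMN M N -> x \in D -> x \notin up (M :\: N).
Proof.
rewrite mem_DMN => /andP[/downsetP[_ closedD] /eqP DM_N] xD.
apply/mem_up=> -[m /setDP[mM /negP mNN] le_mx]; apply: mNN.
by rewrite -DM_N inE mM (closedD m x (in_setT m) xD le_mx).
Qed.

Lemma phiMN_downset D : D \in DMN M N -> phiMN N D \in downsets (~: updown M N).
Proof.
move=> DD; have := DD; rewrite mem_DMN => /andP[/downsetP[_ closedD] _].
rewrite inE; apply/downsetP; split.
  apply/subsetP=> x /setDP[xD xNdown].
  by rewrite !inE negb_or xNdown (DMN_notin_up DD xD).
move=> x y; rewrite !inE negb_or => /andP[_ xNdown] /andP[_ yD] le_xy.
by rewrite xNdown (closedD x y (in_setT x) yD le_xy).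
Qed.

Lemma downsets_compl_updown_notin D' :
  D' \in downsets (~: updown M N) ->
  forall x, x \in D' -> (x \notin up (M :\: N)) && (x \notin down N).
Proof.
rewrite inE => /downsetP[/subsetP D'U _] x /D'U.
by rewrite !inE negb_or.
Qed.

Lemma phiMN_inv_DMN D' :
  D' \in downsets (~: updown M N) -> phiMN_inv N D' \in DMN M N.
Proof.
move=> D'D; have avoidD' := downsets_compl_updown_notin D'D.
have := D'D; rewrite inE => /downsetP[_ closedD'].
have /downsetP[NM closedN] := downN.
rewrite mem_DMN; apply/andP; split.
  apply/downsetP; split=> [|x y _]; first exact: subsetT.
  rewrite !inE => /orP[yD'|yN] le_xy; last by rewrite (down_trans le_xy yN) orbT.
  have [_|xNN] := boolP (x \in down N); first by rewrite orbT.
  have /andP[yNup _] := avoidD' y yD'.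
  have xNup : x \notin up (M :\: N) by apply: contra yNup; apply: up_trans.
  by rewrite (closedD' x y) // !inE negb_or xNup.
apply/eqP/setP=> x; rewrite !inE; apply/idP/idP => [/andP[/orP[xD'|xN] xM]|xN].
- have /andP[xNup _] := avoidD' x xD'.
  apply: contraNT xNup => xNN; apply: (subsetP (sub_up _)).
  by rewrite inE xNN.
- by have /mem_down[v vN le_xv] := xN; apply: closedN le_xv.
- by rewrite (subsetP NM x xN) (subsetP (sub_down N) x xN) orbT.
Qed.

Lemma phiMN_invK D : D \in DMN M N -> phiMN_inv N (phiMN N D) = D.
Proof.
move=> /DMN_down_subset /subsetP downN_D; apply/setP=> x; rewrite !inE.
by case: (boolP (x \in down N)) => [/downN_D ->|]; rewrite ?orbT ?orbF ?andbT.
Qed.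

Lemma phiMNK D' :
  D' \in downsets (~: updown M N) -> phiMN N (phiMN_inv N D') = D'.
Proof.
move=> /downsets_compl_updown_notin avoidD'; apply/setP=> x; rewrite !inE.
case: (boolP (x \in D')) => [/avoidD'/andP[_ /negPf->]|_] //=.
by rewrite andNb.
Qed.

Lemma phiMN_subset D1 D2 : D1 \in DMN M N -> D2 \in DMN M N ->
  (D1 \subset D2) = (phiMN N D1 \subset phiMN N D2).
Proof.
move=> D1D D2D; apply/idP/idP => [|sub12]; first exact: setSD.
by rewrite -(phiMN_invK D1D) -(phiMN_invK D2D) setSU.
Qed.

Lemma card_DMN : #|DMN M N| = dnum (~: updown M N).
Proof.
rewrite /dnum -(card_in_imset (f := phiMN N)); last first.
  by move=> D1 D2 D1D D2D eq12; rewrite -(phiMN_invK D1D) eq12 phiMN_invK.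
apply: eq_card => D'; apply/imsetP/idP => [[D DD ->]|D'D].
  exact: phiMN_downset.
by exists (phiMN_inv N D'); rewrite ?phiMNK ?phiMN_inv_DMN.
Qed.

End Slice.

Lemma dnum_sum_DMN M : dnum [set: T] = (\sum_(N in downsets M) #|DMN M N|)%N.
Proof.
rewrite /dnum -sum1_card (partition_big (fun D => D :&: M) (mem (downsets M))).
  by apply: eq_bigr => N _; rewrite sum1dep_card; apply: eq_card => D; rewrite !inE.
by move=> D; rewrite !inE => /downsetI.
Qed.

End Downsets.

Theorem theorem1 (d : Order.disp_t) (T : finPOrderType d) (M : {set T}) :
  (forall N : {set T}, N \in downsets M ->
     (* phi maps D_{M,N}(P) into D(P - M updown N) *)
     (forall D, D \in DMN M N -> phiMN N D \in downsets (~: updown M N)) /\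
     (* the inverse maps D(P - M updown N) into D_{M,N}(P) *)
     (forall D', D' \in downsets (~: updown M N) -> phiMN_inv N D' \in DMN M N) /\
     (* they are mutually inverse *)
     (forall D, D \in DMN M N -> phiMN_inv N (phiMN N D) = D) /\
     (forall D', D' \in downsets (~: updown M N) -> phiMN N (phiMN_inv N D') = D') /\
     (* phi is an order embedding w.r.t. inclusion *)
     (forall D1 D2, D1 \in DMN M N -> D2 \in DMN M N ->
        (D1 \subset D2) = (phiMN N D1 \subset phiMN N D2))) /\
  dnum [set: T] = (\sum_(N in downsets M) dnum (~: updown M N))%N.
Proof.
split=> [N NM|].
  have downN : downset_in M N by rewrite inE in NM.
  split; first exact: phiMN_downset.
  split; first exact: phiMN_inv_DMN.
  split; first exact: phiMN_invK.
  split; first exact: phiMNK.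
  exact: phiMN_subset.
rewrite (dnum_sum_DMN M); apply: eq_bigr => N NM.
by apply: card_DMN; rewrite inE in NM.
Qed.
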